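(* For every $i\in\{1,\dots,K\}$, $$\big\|\mathbb P(\tilde v_i\in\cdot)-\mathbb Q\big\|_{tv}\le \mathbb E\!\left(\min(pv_1,1)\,\frac{v_1}{V}\right).$$
   Context: Uniform urn model. Let $v$ be a random variable with values in the positive integers (number of balls of a given color), let $K\ge 1$, let $v_1,\dots,v_K$ be i.i.d. copies of $v$ (numbers of balls of colors $1,\dots,K$) and $V=v_1+\dots+v_K$. Fix a sampling fraction $p\in(0,1)$, with $pV$ assumed to be an integer. Conditionally on $\mathcal F=\{v_1,\dots,v_K\}$, $pV$ balls are drawn with replacement, independently, each drawn ball having color $i$ with probability $v_i/V$. Let $\tilde v_i$ denote the number of drawn balls of color $i$. Let $\mathbb Q$ be the probability distribution on $\{0,1,2,\dots\}$ given by $\mathbb Q_j=\mathbb E\big(\frac{(pv)^j}{j!}e^{-pv}\big)$, $j\ge0$. For integer-valued laws $\mu,\nu$, $\|\mu-\nu\|_{tv}=\sup_{A\subset\mathbb N}|\mu(A)-\nu(A)|=\frac12\sum_{n\ge0}|\mu(\{n\})-\nu(\{n\})|$. *)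

From Stdlib Require Import Reals List ClassicalEpsilon Arith.
Open Scope R_scope.

(* Value of a series: its limit if it converges, otherwise 0 (all series
   used below have nonnegative bounded terms and do converge). *)
Definition ser (f : nat -> R) : R :=
  epsilon (inhabits 0) (fun l => infinite_sum f l).

(* Expectation over K i.i.d. copies (v_1,...,v_K), represented as a list
   [v_1; ...; v_K], of a function f, where pmf is the law of v. *)
Fixpoint expK (pmf : nat -> R) (k : nat) (f : list nat -> R) : R :=
  match k with
  | O => f nil
  | S k' => ser (fun a => pmf a * expK pmf k' (fun t => f (a :: t)))
  end.

Definition sumV (t : list nat) : nat := fold_right Nat.add 0%nat t.

(* number of draws pV (an integer by hypothesis; floor taken formally) *)
Definition nDraw (p : R) (t : list nat) : nat :=
  Z.to_nat (Int_part (p * INR (sumV t))).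

Definition binom_pmf (m : nat) (q : R) (n : nat) : R :=
  if Nat.leb n m then C m n * q ^ n * (1 - q) ^ (m - n) else 0.

(* P(tilde v_i = n), i in {1..K}: conditionally on F, tilde v_i is
   Binomial(pV, v_i / V). *)
Definition lawTilde (pmf : nat -> R) (p : R) (K i : nat) (n : nat) : R :=
  expK pmf K (fun t =>
    binom_pmf (nDraw p t) (INR (nth (i - 1) t 0%nat) / INR (sumV t)) n).

Definition Qdist (pmf : nat -> R) (p : R) (j : nat) : R :=
  ser (fun a => pmf a * ((p * INR a) ^ j / INR (Factorial.fact j) * exp (- (p * INR a)))).

Definition tv (mu nu : nat -> R) : R :=
  / 2 * ser (fun n => Rabs (mu n - nu n)).

Definition rhsBound (pmf : nat -> R) (p : R) (K : nat) : R :=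
  expK pmf K (fun t =>
    Rmin (p * INR (nth 0 t 0%nat)) 1 * (INR (nth 0 t 0%nat) / INR (sumV t))).

From Stdlib Require Import Reals List ClassicalEpsilon Lra Lia FunctionalExtensionality ZArith.
Open Scope R_scope.

(* Conditionally on the colour counts t = [v_1; ...; v_K], the number of
   drawn balls of colour i is Binomial(pV, v_i / V), with mean p v_i, while
   Q is the Poisson(p v) law averaged over v.  The Barbour-Hall bound
     d_TV(Binomial(m, q), Poisson(m q)) <= q (1 - exp(-m q)) <= min(m q, 1) q,
   proved by Stein's method, gives the conditional estimate
   min(p v_i, 1) v_i / V.  Total variation is convex, so the unconditional
   distance is at most the average of this estimate, and exchangeability of
   the i.i.d. counts lets us replace colour i by colour 1. *)

Lemma sum_scal_l c f n : sum_f_R0 (fun i => c * f i) n = c * sum_f_R0 f n.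
Proof. rewrite scal_sum. apply sum_eq. intros; ring. Qed.

Lemma sum_nonneg_mono (f : nat -> R) N N' :
  (forall k, 0 <= f k) -> (N <= N')%nat -> sum_f_R0 f N <= sum_f_R0 f N'.
Proof.
  intros Hf HN. replace N' with (N + (N' - N))%nat by lia. clear HN.
  induction (N' - N)%nat as [|d IH]; [rewrite Nat.add_0_r; lra|].
  rewrite Nat.add_succ_r, tech5. specialize (Hf (S (N + d))). lra.
Qed.

Lemma sum_nonneg (f : nat -> R) N : (forall k, 0 <= f k) -> 0 <= sum_f_R0 f N.
Proof.
  intro Hf. apply Rle_trans with (f 0%nat); [apply Hf|].
  apply (sum_nonneg_mono f 0 N Hf). lia.
Qed.

Lemma sum_term_le (f : nat -> R) k N :
  (forall i, 0 <= f i) -> (k <= N)%nat -> f k <= sum_f_R0 f N.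
Proof.
  intros Hf Hk. apply Rle_trans with (sum_f_R0 f k); [|apply sum_nonneg_mono; auto].
  destruct k as [|k]; simpl; [lra|]. pose proof (sum_nonneg f k Hf). lra.
Qed.

Lemma sum_vanishing_tail (f : nat -> R) m N : (m <= N)%nat ->
  (forall k, (m < k)%nat -> f k = 0) -> sum_f_R0 f N = sum_f_R0 f m.
Proof.
  intros HN Hf. replace N with (m + (N - m))%nat by lia. clear HN.
  induction (N - m)%nat as [|d IH]; [rewrite Nat.add_0_r; auto|].
  rewrite Nat.add_succ_r, tech5, IH, Hf by lia. ring.
Qed.

Lemma sum_swap (f : nat -> nat -> R) M N :
  sum_f_R0 (fun a => sum_f_R0 (fun b => f a b) M) N =
  sum_f_R0 (fun b => sum_f_R0 (fun a => f a b) N) M.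
Proof. induction N as [|N IH]; simpl; [reflexivity|]. rewrite IH, <- sum_plus. reflexivity. Qed.

Lemma Rabs_le_inv x M : Rabs x <= M -> -M <= x <= M.
Proof. unfold Rabs. destruct (Rcase_abs x); intros; lra. Qed.

Lemma ser_spec f l : infinite_sum f l -> ser f = l.
Proof.
  intro H. unfold ser. apply (uniqueness_sum f); [|exact H].
  apply epsilon_spec. exists l; exact H.
Qed.

Lemma ser_ext f g : (forall n, f n = g n) -> ser f = ser g.
Proof. intro H. f_equal. extensionality n. auto. Qed.

Lemma Un_cv_const c : Un_cv (fun _ => c) c.
Proof. intros e He. exists 0%nat. intros. unfold Rdist. rewrite Rminus_diag, Rabs_R0. lra. Qed.

Lemma infinite_sum_plus f g a b : infinite_sum f a -> infinite_sum g b ->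
  infinite_sum (fun n => f n + g n) (a + b).
Proof.
  intros Hf Hg e He. destruct (CV_plus _ _ _ _ Hf Hg e He) as [N HN].
  exists N. intros n Hn. rewrite sum_plus. apply HN; auto.
Qed.

Lemma infinite_sum_scal f a c : infinite_sum f a -> infinite_sum (fun n => c * f n) (c * a).
Proof.
  intros Hf e He. destruct (CV_mult _ _ _ _ (Un_cv_const c) Hf e He) as [N HN].
  exists N. intros n Hn. rewrite sum_scal_l. apply HN; auto.
Qed.

Lemma infinite_sum_ext f g a : (forall n, f n = g n) -> infinite_sum f a -> infinite_sum g a.
Proof.
  intros H Hf e He. destruct (Hf e He) as [N HN]. exists N. intros n Hn.
  rewrite <- (sum_eq f g n) by auto. apply HN; auto.
Qed.

Lemma infinite_sum_le f g a b :
  (forall n, f n <= g n) -> infinite_sum f a -> infinite_sum g b -> a <= b.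
Proof.
  intros H Hf Hg. apply (Rle_cv_lim (Un := sum_f_R0 f) (Vn := sum_f_R0 g)); auto.
  intro n. apply sum_Rle. auto.
Qed.

Lemma ser_le_of_partial_sums f B :
  (forall n, 0 <= f n) -> (forall N, sum_f_R0 f N <= B) -> ser f <= B.
Proof.
  intros Hf HB.
  destruct (growing_cv (sum_f_R0 f)) as [l Hl].
  - intro n. rewrite tech5. specialize (Hf (S n)). lra.
  - exists B. intros x [N ->]. apply HB.
  - rewrite (ser_spec f l Hl).
    apply (Rle_cv_lim (Un := sum_f_R0 f) (Vn := fun _ => B)); auto. apply Un_cv_const.
Qed.

Section Weighted.
Variable w : nat -> R.
Hypothesis w_nonneg : forall n, 0 <= w n.
Hypothesis w_sum : infinite_sum w 1.

Lemma weighted_summable (g : nat -> R) M : (forall n, Rabs (g n) <= M) ->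
  exists l, infinite_sum (fun n => w n * g n) l.
Proof.
  intro Hg.
  assert (Habs : {l | Un_cv (fun N => sum_f_R0 (fun n => Rabs (w n * g n)) N) l}).
  { apply (Rseries_CV_comp _ (fun n => M * w n)).
    - intro n. split; [apply Rabs_pos|].
      rewrite Rabs_mult, (Rabs_right (w n)), Rmult_comm by (apply Rle_ge; auto).
      apply Rmult_le_compat_r; auto.
    - exists (M * 1). apply infinite_sum_scal, w_sum. }
  apply cv_cauchy_1, cauchy_abs, cv_cauchy_2 in Habs.
  destruct Habs as [l Hl]. exists l. exact Hl.
Qed.

Lemma weighted_sum_bound (g : nat -> R) l M : (forall n, Rabs (g n) <= M) ->
  infinite_sum (fun n => w n * g n) l -> Rabs l <= M.
Proof.
  intros Hg Hl. apply Rabs_le. split.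
  - replace (-M) with (-M * 1) by ring.
    apply (infinite_sum_le (fun n => -M * w n) (fun n => w n * g n)); auto.
    + intro n. specialize (Hg n). apply Rabs_le_inv in Hg.
      pose proof (w_nonneg n). nra.
    + apply infinite_sum_scal, w_sum.
  - replace M with (M * 1) by ring.
    apply (infinite_sum_le (fun n => w n * g n) (fun n => M * w n)); auto.
    + intro n. specialize (Hg n). apply Rabs_le_inv in Hg.
      pose proof (w_nonneg n). nra.
    + apply infinite_sum_scal, w_sum.
Qed.

Lemma weighted_tail_bound (g : nat -> R) M l N : (forall n, Rabs (g n) <= M) ->
  infinite_sum (fun n => w n * g n) l ->
  Rabs (l - sum_f_R0 (fun n => w n * g n) N) <= M * (1 - sum_f_R0 w N).
Proof.
  intros Hg Hl.
  assert (H := sum_maj1 (fun n _ => w n * g n) (fun n => M * w n) 0 l (M * 1) N Hl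
                 (infinite_sum_scal _ _ M w_sum)).
  rewrite sum_scal_l in H. unfold SP in H. rewrite Rmult_minus_distr_l.
  apply H. intro n. rewrite Rabs_mult, (Rabs_right (w n)), Rmult_comm by (apply Rle_ge; auto).
  apply Rmult_le_compat_r; auto.
Qed.

Lemma weighted_inner_truncation (G : nat -> nat -> R) (F : nat -> R) M n :
  (forall a b, Rabs (G a b) <= M) -> (forall a, infinite_sum (fun b => w b * G a b) (F a)) ->
  Rabs (sum_f_R0 (fun a => w a * F a) n -
        sum_f_R0 (fun a => w a * sum_f_R0 (fun b => w b * G a b) n) n)
  <= M * (1 - sum_f_R0 w n).
Proof.
  intros HG HF.
  assert (HM : 0 <= M) by (specialize (HG 0%nat 0%nat); pose proof (Rabs_pos (G 0%nat 0%nat)); lra).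
  assert (Hmass : sum_f_R0 w n <= 1) by exact (sum_incr w n 1 w_sum w_nonneg).
  rewrite <- minus_sum. eapply Rle_trans; [apply Rsum_abs|].
  apply Rle_trans with (sum_f_R0 (fun a => w a * (M * (1 - sum_f_R0 w n))) n).
  - apply sum_Rle. intros a _. rewrite <- Rmult_minus_distr_l, Rabs_mult.
    rewrite (Rabs_right (w a)) by (apply Rle_ge; auto).
    apply Rmult_le_compat_l; auto. apply weighted_tail_bound; auto.
  - rewrite <- scal_sum.
    assert (0 <= M * (1 - sum_f_R0 w n)) by (apply Rmult_le_pos; lra). nra.
Qed.

(* Diagonal partial sums of a [w x w]-weighted double series converge to
   its iterated sum; this is the approximation behind [weighted_fubini]. *)
Lemma weighted_diagonal_cv (G : nat -> nat -> R) M : (forall a b, Rabs (G a b) <= M) ->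
  Un_cv (fun N => sum_f_R0 (fun a => w a * sum_f_R0 (fun b => w b * G a b) N) N)
        (ser (fun a => w a * ser (fun b => w b * G a b))).
Proof.
  intros HG.
  assert (HM : 0 <= M) by (specialize (HG 0%nat 0%nat); pose proof (Rabs_pos (G 0%nat 0%nat)); lra).
  set (F := fun a => ser (fun b => w b * G a b)).
  assert (HF : forall a, infinite_sum (fun b => w b * G a b) (F a)).
  { intro a. destruct (weighted_summable (G a) M (HG a)) as [l Hl].
    unfold F. rewrite (ser_spec _ _ Hl). exact Hl. }
  assert (HFb : forall a, Rabs (F a) <= M) by (intro a; exact (weighted_sum_bound _ _ _ (HG a) (HF a))).
  destruct (weighted_summable F M HFb) as [S HS].
  change (Un_cv (fun N => sum_f_R0 (fun a => w a * sum_f_R0 (fun b => w b * G a b) N) N)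
                (ser (fun a => w a * F a))).
  rewrite (ser_spec _ _ HS).
  intros e He.
  destruct (HS (e/2)) as [N1 HN1]; [lra|].
  destruct (w_sum (e/(2*(M+1)))) as [N2 HN2].
  { apply Rlt_gt, Rdiv_lt_0_compat; lra. }
  exists (N1 + N2)%nat. intros n Hn.
  specialize (HN1 n ltac:(lia)). specialize (HN2 n ltac:(lia)).
  unfold Rdist in *. apply Rabs_def2 in HN2.
  assert (Htrunc := weighted_inner_truncation G F M n HG HF).
  assert (Hsmall : M * (1 - sum_f_R0 w n) <= e / 2).
  { apply Rle_trans with (M * (e / (2 * (M + 1)))); [apply Rmult_le_compat_l; lra|].
    apply (Rmult_le_reg_r (2 * (M + 1))); [lra|].
    replace (M * (e / (2 * (M + 1))) * (2 * (M + 1))) with (M * e) by (field; lra). nra. }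
  match goal with |- Rabs (?D - _) < _ =>
    replace (D - S) with ((D - sum_f_R0 (fun a => w a * F a) n) +
                          (sum_f_R0 (fun a => w a * F a) n - S)) by ring end.
  eapply Rle_lt_trans; [apply Rabs_triang|]. rewrite Rabs_minus_sym in Htrunc. lra.
Qed.

Lemma weighted_fubini (G : nat -> nat -> R) M : (forall a b, Rabs (G a b) <= M) ->
  ser (fun a => w a * ser (fun b => w b * G a b)) =
  ser (fun b => w b * ser (fun a => w a * G a b)).
Proof.
  intros HG.
  eapply UL_sequence; [exact (weighted_diagonal_cv G M HG)|].
  intros e He. destruct (weighted_diagonal_cv (fun b a => G a b) M (fun b a => HG a b) e He)
    as [N HN].
  exists N. intros n Hn. specialize (HN n Hn).
  replace (sum_f_R0 (fun a => w a * sum_f_R0 (fun b => w b * G a b) n) n) with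
    (sum_f_R0 (fun b => w b * sum_f_R0 (fun a => w a * G a b) n) n); auto.
  transitivity (sum_f_R0 (fun b => sum_f_R0 (fun a => w b * w a * G a b) n) n).
  - apply sum_eq. intros b _. rewrite <- sum_scal_l. apply sum_eq. intros; ring.
  - rewrite sum_swap. apply sum_eq. intros a _. rewrite <- sum_scal_l. apply sum_eq. intros; ring.
Qed.

End Weighted.

(** * Expectations over K i.i.d. copies *)

(* Bounded functions of the sample [t = [v_1; ...; v_K]]: the class on which
   [expK] is a well-behaved (linear, monotone) expectation. *)
Definition bounded (f : list nat -> R) : Prop := exists M, forall t, Rabs (f t) <= M.

Lemma bounded_comp f (s : list nat -> list nat) : bounded f -> bounded (fun t => f (s t)).
Proof. intros [M HM]. exists M. intro; apply HM. Qed.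

Lemma bounded_cons f a : bounded f -> bounded (fun t => f (a :: t)).
Proof. apply (bounded_comp f (cons a)). Qed.

Lemma bounded_plus f g : bounded f -> bounded g -> bounded (fun t => f t + g t).
Proof.
  intros [M HM] [N HN]. exists (M + N). intro t.
  eapply Rle_trans; [apply Rabs_triang|]. specialize (HM t); specialize (HN t); lra.
Qed.

Lemma bounded_scal c f : bounded f -> bounded (fun t => c * f t).
Proof.
  intros [M HM]. exists (Rabs c * M). intro t. rewrite Rabs_mult.
  apply Rmult_le_compat_l; [apply Rabs_pos|apply HM].
Qed.

Lemma bounded_opp f : bounded f -> bounded (fun t => - f t).
Proof. intros [M HM]. exists M. intro t. rewrite Rabs_Ropp. auto. Qed.

Lemma bounded_abs f : bounded f -> bounded (fun t => Rabs (f t)).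
Proof. intros [M HM]. exists M. intro t. rewrite Rabs_Rabsolu. auto. Qed.

Lemma bounded_sum (F : nat -> list nat -> R) N :
  (forall n, bounded (F n)) -> bounded (fun t => sum_f_R0 (fun n => F n t) N).
Proof.
  intro H. induction N as [|N IH]; simpl; [apply H|].
  apply (bounded_plus (fun t => sum_f_R0 (fun n => F n t) N) (F (S N))); auto.
Qed.

Definition in_support (pmf : nat -> R) (k : nat) (t : list nat) : Prop :=
  length t = k /\ (forall x, In x t -> 0 < pmf x).

Section IidExpectation.
Variable pmf : nat -> R.
Hypothesis pmf_nonneg : forall n, 0 <= pmf n.
Hypothesis pmf_sum : infinite_sum pmf 1.

Lemma expK_bound k : forall f M, (forall t, Rabs (f t) <= M) -> Rabs (expK pmf k f) <= M.
Proof.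
  induction k as [|k IH]; intros f M HM; simpl; [apply HM|].
  assert (Hin : forall a, Rabs (expK pmf k (fun t => f (a :: t))) <= M).
  { intro a. apply IH. intro; apply HM. }
  destruct (weighted_summable pmf pmf_nonneg pmf_sum _ M Hin) as [l Hl].
  rewrite (ser_spec _ _ Hl). exact (weighted_sum_bound pmf pmf_nonneg pmf_sum _ l M Hin Hl).
Qed.

Lemma expK_S_series k f : bounded f ->
  infinite_sum (fun a => pmf a * expK pmf k (fun t => f (a :: t))) (expK pmf (S k) f).
Proof.
  intros [M HM].
  assert (Hin : forall a, Rabs (expK pmf k (fun t => f (a :: t))) <= M).
  { intro a. apply expK_bound. intro; apply HM. }
  destruct (weighted_summable pmf pmf_nonneg pmf_sum _ M Hin) as [l Hl].
  simpl. rewrite (ser_spec _ _ Hl). exact Hl.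
Qed.

Lemma expK_plus k : forall f g, bounded f -> bounded g ->
  expK pmf k (fun t => f t + g t) = expK pmf k f + expK pmf k g.
Proof.
  induction k as [|k IH]; intros f g Hf Hg; [reflexivity|].
  simpl. apply ser_spec.
  eapply infinite_sum_ext;
    [|exact (infinite_sum_plus _ _ _ _ (expK_S_series k f Hf) (expK_S_series k g Hg))].
  intro a. simpl. rewrite (IH (fun t => f (a :: t)) (fun t => g (a :: t)));
    [ring|apply bounded_cons; auto ..].
Qed.

Lemma expK_scal k : forall c f, bounded f -> expK pmf k (fun t => c * f t) = c * expK pmf k f.
Proof.
  induction k as [|k IH]; intros c f Hf; [reflexivity|].
  simpl. apply ser_spec.
  eapply infinite_sum_ext; [|exact (infinite_sum_scal _ _ c (expK_S_series k f Hf))].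
  intro a. simpl. rewrite (IH c (fun t => f (a :: t))); [ring|apply bounded_cons; auto].
Qed.

Lemma ser_weighted_const c : ser (fun a => pmf a * c) = c.
Proof.
  apply ser_spec. pose proof (infinite_sum_scal _ _ c pmf_sum) as H.
  rewrite Rmult_1_r in H. eapply infinite_sum_ext; [|exact H]. intro; simpl; ring.
Qed.

Lemma expK_const k c : expK pmf k (fun _ => c) = c.
Proof.
  induction k as [|k IH]; [reflexivity|].
  simpl. transitivity (ser (fun a => pmf a * c)); [|apply ser_weighted_const].
  apply ser_ext. intro a. rewrite IH. reflexivity.
Qed.

Lemma expK_mono k : forall f g, bounded f -> bounded g ->
  (forall t, in_support pmf k t -> f t <= g t) -> expK pmf k f <= expK pmf k g.
Proof.
  induction k as [|k IH]; intros f g Hf Hg H.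
  - simpl. apply H. split; [reflexivity|]. intros x [].
  - eapply infinite_sum_le; [|exact (expK_S_series k f Hf)|exact (expK_S_series k g Hg)].
    intro a. destruct (pmf_nonneg a) as [Hpos|Hzero]; [|rewrite <- Hzero; lra].
    apply Rmult_le_compat_l; [lra|]. apply IH; try apply bounded_cons; auto.
    intros t [Hl Ht]. apply H. split; [simpl; lia|]. intros x [<-|Hx]; auto.
Qed.

Lemma expK_ext k f g : bounded f -> bounded g ->
  (forall t, in_support pmf k t -> f t = g t) -> expK pmf k f = expK pmf k g.
Proof.
  intros Hf Hg H. apply Rle_antisym; apply expK_mono; auto;
  intros t Ht; rewrite (H t Ht); lra.
Qed.

Lemma expK_opp k f : bounded f -> expK pmf k (fun t => - f t) = - expK pmf k f.
Proof.
  intro Hf. transitivity (expK pmf k (fun t => -1 * f t)).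
  - apply expK_ext; [apply bounded_opp|apply bounded_scal|]; auto. intros; ring.
  - rewrite expK_scal by exact Hf. ring.
Qed.

Lemma expK_minus k f g : bounded f -> bounded g ->
  expK pmf k (fun t => f t - g t) = expK pmf k f - expK pmf k g.
Proof.
  intros Hf Hg. unfold Rminus. rewrite <- expK_opp by exact Hg.
  apply expK_plus; [|apply bounded_opp]; auto.
Qed.

Lemma expK_abs k f : bounded f -> Rabs (expK pmf k f) <= expK pmf k (fun t => Rabs (f t)).
Proof.
  intro Hf. assert (Ha := bounded_abs f Hf). apply Rabs_le. split.
  - rewrite <- expK_opp by exact Ha. apply expK_mono; [apply bounded_opp; auto|auto|].
    intros t _. pose proof (Rle_abs (- f t)) as H. rewrite Rabs_Ropp in H. lra.
  - apply expK_mono; auto. intros; apply Rle_abs.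
Qed.

Lemma expK_sum k (F : nat -> list nat -> R) N : (forall n, bounded (F n)) ->
  sum_f_R0 (fun n => expK pmf k (F n)) N = expK pmf k (fun t => sum_f_R0 (fun n => F n t) N).
Proof.
  intro H. induction N as [|N IH]; simpl; [reflexivity|].
  rewrite IH, (expK_plus k (fun t => sum_f_R0 (fun n => F n t) N) (F (S N)));
    [reflexivity|apply bounded_sum|]; auto.
Qed.

Lemma expK_coordinate (g : nat -> R) k j : (j < k)%nat ->
  expK pmf k (fun t => g (nth j t 0%nat)) = ser (fun a => pmf a * g a).
Proof.
  revert j. induction k as [|k IH]; intros j Hj; [lia|].
  destruct j as [|j]; simpl.
  - apply ser_ext. intro a. rewrite expK_const. reflexivity.
  - rewrite <- (ser_weighted_const (ser (fun a => pmf a * g a))).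
    apply ser_ext. intro a. rewrite (IH j) by lia. reflexivity.
Qed.

Fixpoint swapAt (j : nat) (t : list nat) : list nat :=
  match j, t with
  | O, a :: b :: r => b :: a :: r
  | S j', a :: r => a :: swapAt j' r
  | _, _ => t
  end.

Lemma expK_swapAt j : forall k f, bounded f -> expK pmf k f = expK pmf k (fun t => f (swapAt j t)).
Proof.
  induction j as [|j IH]; intros k f Hf.
  - destruct k as [|[|k]]; try reflexivity.
    destruct Hf as [M HM].
    change (ser (fun a => pmf a * ser (fun b => pmf b * expK pmf k (fun t => f (a :: b :: t)))) =
            ser (fun a => pmf a * ser (fun b => pmf b * expK pmf k (fun t => f (b :: a :: t))))).
    apply (weighted_fubini pmf pmf_nonneg pmf_sum
             (fun a b => expK pmf k (fun t => f (a :: b :: t))) M).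
    intros a b. apply expK_bound. intro; apply HM.
  - destruct k as [|k]; [reflexivity|].
    simpl. apply ser_ext. intro a. f_equal.
    apply (IH k (fun t => f (a :: t))). apply bounded_cons; auto.
Qed.

Lemma sumV_swapAt j t : sumV (swapAt j t) = sumV t.
Proof.
  revert t; induction j as [|j IH]; intros t.
  - destruct t as [|a [|b r]]; simpl; auto; unfold sumV; simpl; lia.
  - destruct t as [|a r]; simpl; auto.
Qed.

Lemma nth_swapAt j t : (S j < length t)%nat -> nth (S j) (swapAt j t) 0%nat = nth j t 0%nat.
Proof.
  revert t; induction j as [|j IH]; intros t Ht.
  - destruct t as [|a [|b r]]; simpl in *; auto; lia.
  - destruct t as [|a r]; simpl in *; [lia|]. apply IH. lia.
Qed.

Lemma expK_exchange (h : nat -> nat -> R) M k : (forall a b, Rabs (h a b) <= M) ->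
  forall j, (j < k)%nat ->
  expK pmf k (fun t => h (nth j t 0%nat) (sumV t)) = expK pmf k (fun t => h (nth 0 t 0%nat) (sumV t)).
Proof.
  intros HM j. induction j as [|j IH]; intros Hj; auto.
  assert (Hb : forall g : list nat -> nat, bounded (fun t => h (g t) (sumV t))).
  { intro g. exists M. intro; apply HM. }
  rewrite (expK_swapAt j k) by apply Hb.
  rewrite <- IH by lia. apply expK_ext; [|apply Hb|].
  - apply (bounded_comp (fun t => h (nth (S j) t 0%nat) (sumV t))), Hb.
  - intros t [Hl _]. rewrite sumV_swapAt, nth_swapAt; auto. lia.
Qed.

End IidExpectation.

(** * The Poisson distribution *)

Definition poi (l : R) (n : nat) : R := l ^ n / INR (Factorial.fact n) * exp (- l).
Definition poiCdf (l : R) (k : nat) : R := sum_f_R0 (poi l) k.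

Lemma poi_pos l n : 0 < l -> 0 < poi l n.
Proof.
  intro Hl. unfold poi. apply Rmult_lt_0_compat; [|apply exp_pos].
  apply Rdiv_lt_0_compat; [apply pow_lt; auto|apply INR_fact_lt_0].
Qed.

Lemma poi_nonneg l n : 0 <= l -> 0 <= poi l n.
Proof.
  intro Hl. unfold poi. apply Rmult_le_pos; [|left; apply exp_pos].
  apply Rmult_le_pos; [apply pow_le; auto|left; apply Rinv_0_lt_compat, INR_fact_lt_0].
Qed.

Lemma poi_0 l : poi l 0 = exp (- l).
Proof. unfold poi. simpl. field. Qed.

Lemma poi_S l n : poi l (S n) = l / INR (S n) * poi l n.
Proof.
  unfold poi. rewrite fact_simpl, mult_INR. simpl pow.
  assert (INR (S n) <> 0) by (apply not_0_INR; lia).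
  assert (INR (Factorial.fact n) <> 0) by apply INR_fact_neq_0.
  field. auto.
Qed.

Lemma poi_sum l : infinite_sum (poi l) 1.
Proof.
  destruct (exist_exp l) as [e He] eqn:Hee.
  assert (Hexp : exp l = e) by (unfold exp; rewrite Hee; reflexivity).
  unfold exp_in in He.
  assert (H := infinite_sum_scal _ _ (exp (- l)) He).
  rewrite <- Hexp, <- exp_plus, Rplus_opp_l, exp_0 in H.
  eapply infinite_sum_ext; [|exact H]. intro n. unfold poi, Rdiv. ring.
Qed.

Lemma poiCdf_S l k : poiCdf l (S k) = poiCdf l k + poi l (S k).
Proof. apply tech5. Qed.

Lemma poiCdf_le_1 l k : 0 <= l -> poiCdf l k <= 1.
Proof. intro Hl. apply sum_incr; [apply poi_sum|intro; apply poi_nonneg; auto]. Qed.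

Lemma poi_le_1 l n : 0 <= l -> poi l n <= 1.
Proof.
  intro Hl. eapply Rle_trans; [|apply (poiCdf_le_1 l n Hl)].
  apply sum_term_le; auto. intro; apply poi_nonneg; auto.
Qed.

(* Geometric tail estimate: beyond [j >= l], the Poisson weights decay at
   least like a geometric sequence of ratio [l / (j+1)], so the tail mass
   [1 - poiCdf l j] is at most [c * poi l j] with [c = l / (j + 1 - l)]. *)
Lemma poi_partial_tail l j d : 0 < l -> l < INR j + 1 ->
  poiCdf l (j + d) - poiCdf l j + (l / (INR j + 1 - l)) * poi l (j + d)
  <= (l / (INR j + 1 - l)) * poi l j.
Proof.
  intros Hl Hj. set (c := l / (INR j + 1 - l)).
  assert (Hc : 0 < c) by (unfold c; apply Rdiv_lt_0_compat; lra).
  induction d as [|d IH]; [rewrite Nat.add_0_r; lra|].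
  rewrite Nat.add_succ_r, poiCdf_S, poi_S.
  assert (Hp := poi_pos l (j + d) Hl).
  assert (Hratio : l / INR (S (j + d)) <= l / (INR j + 1)).
  { unfold Rdiv. apply Rmult_le_compat_l; [lra|]. apply Rinv_le_contravar.
    - pose proof (pos_INR j); lra.
    - rewrite S_INR, plus_INR. pose proof (pos_INR d). lra. }
  assert (Hc_eq : (1 + c) * (l / (INR j + 1)) = c) by (unfold c; field; split; lra).
  assert (0 <= l / INR (S (j + d))).
  { apply Rmult_le_pos; [lra|left; apply Rinv_0_lt_compat, lt_0_INR; lia]. }
  assert ((1 + c) * (l / INR (S (j + d)) * poi l (j + d)) <= c * poi l (j + d)).
  { rewrite <- Hc_eq at 2. rewrite <- Rmult_assoc. apply Rmult_le_compat_r; [lra|].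
    apply Rmult_le_compat_l; lra. }
  lra.
Qed.

Lemma poi_tail l j : 0 < l -> l < INR j + 1 ->
  1 - poiCdf l j <= (l / (INR j + 1 - l)) * poi l j.
Proof.
  intros Hl Hj.
  assert (Hc : 0 < l / (INR j + 1 - l)) by (apply Rdiv_lt_0_compat; lra).
  assert (Hp := poi_pos l j Hl).
  assert (H : forall N, poiCdf l N <= poiCdf l j + (l / (INR j + 1 - l)) * poi l j).
  { intro N. destruct (le_lt_dec N j) as [HN|HN].
    - assert (poiCdf l N <= poiCdf l j).
      { apply sum_nonneg_mono; auto. intro; apply poi_nonneg; lra. }
      nra.
    - replace N with (j + (N - j))%nat by lia.
      pose proof (poi_partial_tail l j (N - j) Hl Hj).
      pose proof (poi_pos l (j + (N - j)) Hl).
      assert (0 < l / (INR j + 1 - l) * poi l (j + (N - j))) by (apply Rmult_lt_0_compat; auto).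
      lra. }
  assert (1 <= poiCdf l j + l / (INR j + 1 - l) * poi l j).
  { apply (Rle_cv_lim (Un := poiCdf l) (Vn := fun _ => poiCdf l j + l / (INR j + 1 - l) * poi l j));
      [exact H|apply poi_sum|apply Un_cv_const]. }
  lra.
Qed.

(** * Stein's method for the Poisson distribution *)

(* For the point test function 1{k = i}, the solution of the Stein equation
     l g(k+1) - k g(k) = 1{k = i} - poi l i,   g(0) = 0,
   is [steinSol l i]; its value at [k+1] is expressed through [poiCdf l k]. *)
Definition steinSol (l : R) (i k : nat) : R :=
  match k with
  | O => 0
  | S k' => if Nat.leb i k' then poi l i * (1 - poiCdf l k') / (l * poi l k')
            else - (poi l i * poiCdf l k') / (l * poi l k')
  end.

Lemma steinSol_equation l i k : 0 < l ->
  l * steinSol l i (S k) - INR k * steinSol l i k = (if Nat.eqb k i then 1 else 0) - poi l i.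
Proof.
  intro Hl. assert (Hpk := poi_pos l k Hl).
  destruct k as [|k].
  - simpl steinSol. rewrite Rmult_0_l, Rminus_0_r.
    destruct i as [|i]; simpl; unfold poiCdf; simpl; field; lra.
  - assert (Hpk' := poi_pos l k Hl).
    assert (HSk : INR (S k) <> 0) by (apply not_0_INR; lia).
    unfold steinSol. rewrite poiCdf_S.
    destruct (Nat.leb i (S k)) eqn:E1; destruct (Nat.leb i k) eqn:E2;
    destruct (Nat.eqb (S k) i) eqn:E3;
    apply Nat.leb_le in E1 || apply Nat.leb_gt in E1;
    apply Nat.leb_le in E2 || apply Nat.leb_gt in E2;
    apply Nat.eqb_eq in E3 || apply Nat.eqb_neq in E3; try lia;
    [| subst i |]; rewrite (poi_S l k); field; repeat split; lra.
Qed.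

Lemma cdf_ratio_increasing l k : 0 < l ->
  poiCdf l k / poi l k <= poiCdf l (S k) / poi l (S k).
Proof.
  intro Hl. set (X := fun k => poiCdf l k / poi l k).
  assert (Hrec : forall k, X (S k) = 1 + INR (S k) / l * X k).
  { intro k'. unfold X. rewrite poiCdf_S, poi_S. assert (Hp := poi_pos l k' Hl).
    assert (INR (S k') <> 0) by (apply not_0_INR; lia). field. repeat split; lra. }
  assert (Hpos : forall k, 0 <= X k).
  { intro k'. apply Rmult_le_pos.
    - apply sum_nonneg. intro; apply poi_nonneg; lra.
    - left; apply Rinv_0_lt_compat, poi_pos; auto. }
  assert (H0 : X 0%nat = 1) by (unfold X, poiCdf; simpl; field; apply Rgt_not_eq, poi_pos; auto).
  change (X k <= X (S k)). induction k as [|k IH].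
  - rewrite Hrec, H0, Rmult_1_r. assert (0 < INR 1 / l) by (apply Rdiv_lt_0_compat; simpl; lra).
    lra.
  - rewrite (Hrec (S k)). pose proof (Hrec k).
    assert (INR (S k) / l * X k <= INR (S (S k)) / l * X (S k)).
    { unfold Rdiv. rewrite (S_INR (S k)).
      assert (0 <= / l) by (left; apply Rinv_0_lt_compat; auto).
      pose proof (pos_INR (S k)). pose proof (Hpos (S k)).
      assert (INR (S k) * X k <= INR (S k) * X (S k)) by (apply Rmult_le_compat_l; auto).
      nra. }
    lra.
Qed.

Lemma tail_vs_weight l j : 0 < l -> (1 - poiCdf l j) * (INR j - l) <= l * poi l j.
Proof.
  intro Hl. assert (Hp := poi_pos l j Hl).
  assert (Hu : 0 <= 1 - poiCdf l j) by (pose proof (poiCdf_le_1 l j); lra).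
  destruct (Rle_dec (INR j) l) as [Hle|Hgt].
  - assert (0 <= l * poi l j) by (apply Rmult_le_pos; lra). nra.
  - assert (HT := poi_tail l j Hl ltac:(lra)).
    assert (Hfrac : 0 <= (INR j - l) / (INR j + 1 - l) <= 1).
    { split; [apply Rmult_le_pos; [lra|left; apply Rinv_0_lt_compat; lra]|].
      apply (Rmult_le_reg_r (INR j + 1 - l)); [lra|].
      replace ((INR j - l) / (INR j + 1 - l) * (INR j + 1 - l)) with (INR j - l) by (field; lra).
      lra. }
    apply Rle_trans with (l / (INR j + 1 - l) * poi l j * (INR j - l)).
    + apply Rmult_le_compat_r; lra.
    + replace (l / (INR j + 1 - l) * poi l j * (INR j - l)) with
        ((l * poi l j) * ((INR j - l) / (INR j + 1 - l))) by (field; lra).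
      assert (0 <= l * poi l j) by (apply Rmult_le_pos; lra). nra.
Qed.

Lemma tail_ratio_decreasing l k : 0 < l ->
  (1 - poiCdf l (S k)) / poi l (S k) <= (1 - poiCdf l k) / poi l k.
Proof.
  intro Hl. set (j := S k).
  assert (Hp := poi_pos l k Hl).
  assert (Hu : 0 <= 1 - poiCdf l j) by (pose proof (poiCdf_le_1 l j); lra).
  assert (Hrj : poi l j = l / INR j * poi l k) by apply poi_S.
  assert (Hj : 0 < INR j) by (apply lt_0_INR; unfold j; lia).
  assert (Key := tail_vs_weight l j Hl).
  replace (1 - poiCdf l k) with ((1 - poiCdf l j) + poi l j) by (unfold j; rewrite poiCdf_S; lra).
  rewrite Hrj. rewrite Hrj in Key.
  set (u := 1 - poiCdf l j) in *.
  apply (Rmult_le_reg_r (l / INR j * poi l k * poi l k)).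
  { assert (0 < l / INR j) by (apply Rdiv_lt_0_compat; lra).
    apply Rmult_lt_0_compat; [apply Rmult_lt_0_compat|]; auto. }
  replace (u / (l / INR j * poi l k) * (l / INR j * poi l k * poi l k)) with (u * poi l k)
    by (field; repeat split; lra).
  replace ((u + l / INR j * poi l k) / poi l k * (l / INR j * poi l k * poi l k)) with
    ((u * l + l * (l / INR j * poi l k)) / INR j * poi l k) by (field; repeat split; lra).
  apply Rmult_le_compat_r; [lra|].
  apply (Rmult_le_reg_r (INR j)); auto.
  replace ((u * l + l * (l / INR j * poi l k)) / INR j * INR j) with
    (u * l + l * (l / INR j * poi l k)) by (field; lra).
  nra.
Qed.

Lemma steinSol_increment_off l i j : 0 < l -> i <> S j ->
  steinSol l i (S (S j)) - steinSol l i (S j) <= 0.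
Proof.
  intros Hl Hij. unfold steinSol.
  assert (Hp := poi_pos l j Hl). assert (Hp' := poi_pos l (S j) Hl).
  assert (Hc : 0 < poi l i / l) by (apply Rdiv_lt_0_compat; [apply poi_pos|]; lra).
  destruct (Nat.leb i (S j)) eqn:E1; destruct (Nat.leb i j) eqn:E2;
  apply Nat.leb_le in E1 || apply Nat.leb_gt in E1;
  apply Nat.leb_le in E2 || apply Nat.leb_gt in E2; try lia.
  - assert (HT := tail_ratio_decreasing l j Hl).
    replace (poi l i * (1 - poiCdf l (S j)) / (l * poi l (S j)) - poi l i * (1 - poiCdf l j) / (l * poi l j))
      with (poi l i / l * ((1 - poiCdf l (S j)) / poi l (S j) - (1 - poiCdf l j) / poi l j))
      by (field; repeat split; lra).
    nra.
  - assert (HX := cdf_ratio_increasing l j Hl).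
    replace (- (poi l i * poiCdf l (S j)) / (l * poi l (S j)) - - (poi l i * poiCdf l j) / (l * poi l j))
      with (poi l i / l * (poiCdf l j / poi l j - poiCdf l (S j) / poi l (S j)))
      by (field; repeat split; lra).
    nra.
Qed.

Lemma poiCdf_shift_bound l j : 0 < l ->
  l * poiCdf l j <= INR (S j) * (poiCdf l (S j) - poi l 0).
Proof.
  intro Hl. induction j as [|j IH].
  - unfold poiCdf. simpl sum_f_R0. rewrite poi_S. right. simpl. field.
  - rewrite (poiCdf_S l j), (poiCdf_S l (S j)).
    assert (Hw : INR (S (S j)) * poi l (S (S j)) = l * poi l (S j)).
    { rewrite poi_S. field. apply not_0_INR. lia. }
    assert (Hpp : 0 <= poiCdf l (S j) - poi l 0).
    { rewrite poiCdf_S. pose proof (poi_nonneg l (S j) ltac:(lra)).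
      pose proof (sum_nonneg_mono (poi l) 0 j (fun k => poi_nonneg l k ltac:(lra)) ltac:(lia)).
      unfold poiCdf in *. simpl in *. lra. }
    rewrite (S_INR (S j)).
    replace ((INR (S j) + 1) * (poiCdf l (S j) + poi l (S (S j)) - poi l 0)) with
      (INR (S j) * (poiCdf l (S j) - poi l 0) + (poiCdf l (S j) - poi l 0) +
       INR (S (S j)) * poi l (S (S j))) by (rewrite (S_INR (S j)); ring).
    rewrite Hw. lra.
Qed.

Lemma steinSol_increment_diag l j : 0 < l ->
  steinSol l (S j) (S (S j)) - steinSol l (S j) (S j) <= (1 - exp (- l)) / l.
Proof.
  intro Hl. unfold steinSol. rewrite Nat.leb_refl.
  replace (Nat.leb (S j) j) with false by (symmetry; apply Nat.leb_gt; lia).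
  assert (Hp := poi_pos l j Hl).
  assert (HSj : 0 < INR (S j)) by (apply lt_0_INR; lia).
  replace (poi l (S j) * (1 - poiCdf l (S j)) / (l * poi l (S j)) - - (poi l (S j) * poiCdf l j) / (l * poi l j))
    with ((1 - poiCdf l (S j)) / l + poiCdf l j / INR (S j))
    by (rewrite (poi_S l j); field; repeat split; lra).
  rewrite <- poi_0.
  assert (poiCdf l j / INR (S j) <= (poiCdf l (S j) - poi l 0) / l).
  { apply (Rmult_le_reg_r (l * INR (S j))); [nra|].
    replace (poiCdf l j / INR (S j) * (l * INR (S j))) with (l * poiCdf l j) by (field; lra).
    replace ((poiCdf l (S j) - poi l 0) / l * (l * INR (S j))) with
      (INR (S j) * (poiCdf l (S j) - poi l 0)) by (field; lra).
    apply poiCdf_shift_bound; auto. }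
  replace ((1 - poi l 0) / l) with ((1 - poiCdf l (S j)) / l + (poiCdf l (S j) - poi l 0) / l)
    by (field; lra).
  lra.
Qed.

Lemma binom_coef_0 n : C n 0 = 1.
Proof. unfold C. rewrite Nat.sub_0_r. simpl. field. apply INR_fact_neq_0. Qed.

Lemma binom_coef_diag n : C n n = 1.
Proof. unfold C. rewrite Nat.sub_diag. simpl. field. apply INR_fact_neq_0. Qed.

Lemma binom_pmf_out n q k : (n < k)%nat -> binom_pmf n q k = 0.
Proof. intro H. unfold binom_pmf. replace (Nat.leb k n) with false; auto. symmetry; apply Nat.leb_gt; auto. Qed.

Lemma binom_pmf_nonneg n q k : 0 <= q <= 1 -> 0 <= binom_pmf n q k.
Proof.
  intro Hq. unfold binom_pmf. destruct (Nat.leb k n); [|lra].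
  repeat apply Rmult_le_pos; try (apply pow_le; lra).
  - apply pos_INR.
  - left. apply Rinv_0_lt_compat. rewrite <- mult_INR. apply lt_0_INR.
    pose proof (Factorial.lt_O_fact k). pose proof (Factorial.lt_O_fact (n - k)). lia.
Qed.

(* Pascal's rule for the binomial weights: the last trial fails or succeeds. *)
Lemma binom_pmf_S0 n q : binom_pmf (S n) q 0 = (1 - q) * binom_pmf n q 0.
Proof. unfold binom_pmf. simpl Nat.leb. rewrite !binom_coef_0, !Nat.sub_0_r. simpl. ring. Qed.

Lemma binom_pmf_SS n q k :
  binom_pmf (S n) q (S k) = (1 - q) * binom_pmf n q (S k) + q * binom_pmf n q k.
Proof.
  destruct (lt_eq_lt_dec k n) as [[Hlt|Heq]|Hgt].
  - unfold binom_pmf.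
    replace (Nat.leb (S k) (S n)) with true by (symmetry; apply Nat.leb_le; lia).
    replace (Nat.leb (S k) n) with true by (symmetry; apply Nat.leb_le; lia).
    replace (Nat.leb k n) with true by (symmetry; apply Nat.leb_le; lia).
    rewrite <- pascal by auto.
    replace (S n - S k)%nat with (n - k)%nat by lia.
    replace (n - k)%nat with (S (n - S k)) by lia. simpl. ring.
  - subst k. rewrite (binom_pmf_out n q (S n)) by lia. unfold binom_pmf.
    rewrite !Nat.leb_refl, !Nat.sub_diag, !binom_coef_diag. simpl. ring.
  - rewrite !binom_pmf_out by lia. ring.
Qed.

Definition binomExp (q : R) (n : nat) (F : nat -> R) : R :=
  sum_f_R0 (fun k => binom_pmf n q k * F k) n.

Lemma binomExp_S q n F :
  binomExp q (S n) F = (1 - q) * binomExp q n F + q * binomExp q n (fun k => F (S k)).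
Proof.
  unfold binomExp. rewrite decomp_sum by lia. simpl Init.Nat.pred. rewrite binom_pmf_S0.
  transitivity ((1 - q) * binom_pmf n q 0 * F 0%nat +
     sum_f_R0 (fun i => (1 - q) * (binom_pmf n q (S i) * F (S i)) + q * (binom_pmf n q i * F (S i))) n).
  - f_equal. apply sum_eq. intros i _. rewrite binom_pmf_SS. ring.
  - rewrite sum_plus, !sum_scal_l.
    destruct n as [|n].
    + simpl. rewrite (binom_pmf_out 0 q 1) by lia. ring.
    + rewrite (decomp_sum (fun k => binom_pmf (S n) q k * F k) (S n)) by lia. simpl Init.Nat.pred.
      rewrite tech5, (binom_pmf_out (S n) q (S (S n))) by lia. ring.
Qed.

Lemma binomExp_plus q n F G : binomExp q n (fun k => F k + G k) = binomExp q n F + binomExp q n G.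
Proof. unfold binomExp. rewrite <- sum_plus. apply sum_eq. intros; ring. Qed.

Lemma binomExp_scal q n c F : binomExp q n (fun k => c * F k) = c * binomExp q n F.
Proof. unfold binomExp. rewrite <- sum_scal_l. apply sum_eq. intros; ring. Qed.

Lemma binomExp_ext q n F G : (forall k, F k = G k) -> binomExp q n F = binomExp q n G.
Proof. intro H. unfold binomExp. apply sum_eq. intros; rewrite H; auto. Qed.

Lemma binomExp_one q n : binomExp q n (fun _ => 1) = 1.
Proof.
  induction n as [|n IH].
  - unfold binomExp, binom_pmf. simpl. rewrite binom_coef_0. ring.
  - rewrite binomExp_S, IH. ring.
Qed.

Lemma binomExp_mono q n F G : 0 <= q <= 1 ->
  (forall k, (k <= n)%nat -> F k <= G k) -> binomExp q n F <= binomExp q n G.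
Proof.
  intros Hq H. apply sum_Rle. intros k Hk.
  apply Rmult_le_compat_l; [apply binom_pmf_nonneg|]; auto.
Qed.

Lemma binomExp_size_bias q n F :
  binomExp q (S n) (fun k => INR k * F k) = INR (S n) * q * binomExp q n (fun k => F (S k)).
Proof.
  revert F. induction n as [|n IH]; intro F.
  - rewrite binomExp_S. unfold binomExp, binom_pmf. simpl. rewrite binom_coef_0. simpl. ring.
  - rewrite binomExp_S, IH.
    rewrite (binomExp_ext q (S n) (fun k => INR (S k) * F (S k)) (fun k => INR k * F (S k) + F (S k)))
      by (intro k; rewrite S_INR; ring).
    rewrite binomExp_plus, (IH (fun k => F (S k))), (binomExp_S q n (fun k => F (S k))),
      (S_INR (S n)).
    ring.
Qed.

Lemma binom_pmf_le_1 n q k : 0 <= q <= 1 -> binom_pmf n q k <= 1.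
Proof.
  intro Hq. destruct (le_lt_dec k n) as [Hk|Hk]; [|rewrite binom_pmf_out; auto; lra].
  rewrite <- (binomExp_one q n), <- (Rmult_1_r (binom_pmf n q k)).
  apply (sum_term_le (fun j => binom_pmf n q j * 1) k n); auto.
  intro j. rewrite Rmult_1_r. apply binom_pmf_nonneg; auto.
Qed.

(** * Binomial versus Poisson: the Barbour-Hall bound *)

Lemma sum_zero (f : nat -> R) N : (forall i, (i <= N)%nat -> f i = 0) -> sum_f_R0 f N = 0.
Proof.
  induction N as [|N IH]; intro H; simpl; [apply H; lia|].
  rewrite IH, H; [ring|lia|intros; apply H; lia].
Qed.

Lemma sum_indicator (h : nat -> R) m k : (k <= m)%nat ->
  sum_f_R0 (fun i => h i * (if Nat.eqb k i then 1 else 0)) m = h k.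
Proof.
  induction m as [|m IH]; intro Hk.
  - assert (k = 0%nat) by lia. subst. simpl. ring.
  - rewrite tech5. destruct (Nat.eq_dec k (S m)) as [->|Hne].
    + rewrite Nat.eqb_refl, sum_zero; [ring|]. intros i Hi.
      replace (Nat.eqb (S m) i) with false by (symmetry; apply Nat.eqb_neq; lia). ring.
    + replace (Nat.eqb k (S m)) with false by (symmetry; apply Nat.eqb_neq; auto).
      rewrite IH by lia. ring.
Qed.

Lemma sum_indicator_le (c : R) m j : 0 <= c ->
  sum_f_R0 (fun i => if Nat.eqb i j then c else 0) m <= c.
Proof.
  intro Hc. destruct (le_lt_dec j m) as [Hj|Hj].
  - right. transitivity (sum_f_R0 (fun i => c * (if Nat.eqb j i then 1 else 0)) m);
      [|exact (sum_indicator (fun _ => c) m j Hj)].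
    apply sum_eq. intros i _. rewrite Nat.eqb_sym. destruct (Nat.eqb j i); ring.
  - rewrite sum_zero; [lra|]. intros i Hi.
    replace (Nat.eqb i j) with false by (symmetry; apply Nat.eqb_neq; lia). reflexivity.
Qed.

Section SteinBinomial.
Variable l : R.
Hypothesis l_pos : 0 < l.

Definition steinSolFor (m : nat) (h : nat -> R) (k : nat) : R :=
  sum_f_R0 (fun i => h i * steinSol l i k) m.

Lemma steinSolFor_equation m h k : (k <= m)%nat ->
  l * steinSolFor m h (S k) - INR k * steinSolFor m h k =
  h k - sum_f_R0 (fun i => h i * poi l i) m.
Proof.
  intro Hk. unfold steinSolFor. rewrite <- (sum_indicator h m k Hk).
  rewrite <- !sum_scal_l, <- !minus_sum. apply sum_eq. intros i _.
  transitivity (h i * (l * steinSol l i (S k) - INR k * steinSol l i k)); [ring|].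
  rewrite steinSol_equation by exact l_pos. ring.
Qed.

Lemma steinSolFor_increment m h k : (forall i, 0 <= h i <= 1) ->
  steinSolFor m h (S (S k)) - steinSolFor m h (S k) <= (1 - exp (- l)) / l.
Proof.
  intro Hh. set (c := (1 - exp (- l)) / l).
  assert (Hc : 0 <= c).
  { apply Rmult_le_pos; [|left; apply Rinv_0_lt_compat; auto].
    assert (exp (- l) < 1) by (rewrite <- exp_0; apply exp_increasing; lra). lra. }
  unfold steinSolFor. rewrite <- minus_sum.
  eapply Rle_trans; [|apply (sum_indicator_le c m (S k) Hc)].
  apply sum_Rle. intros i _. rewrite <- Rmult_minus_distr_l. destruct (Hh i).
  destruct (Nat.eqb i (S k)) eqn:E.
  - apply Nat.eqb_eq in E. subst i. pose proof (steinSol_increment_diag l k l_pos).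
    fold c in H1. destruct (Rle_dec 0 (steinSol l (S k) (S (S k)) - steinSol l (S k) (S k))); nra.
  - apply Nat.eqb_neq in E. pose proof (steinSol_increment_off l i k l_pos E). nra.
Qed.

End SteinBinomial.

(* Stein's bound: for a test function [h] with values in [0,1], with
   X ~ Binomial(m, q), m = n+1, and l = m q,
     E h(X) - sum_(i<=m) h(i) poi l i = E[l G(X+1) - X G(X)] = l q E[G(X'+2) - G(X'+1)]
   (size bias, X' ~ Binomial(n, q)), which is at most q (1 - exp(-l)). *)
Lemma binomial_stein_bound n q (h : nat -> R) : 0 < q <= 1 -> (forall k, 0 <= h k <= 1) ->
  binomExp q (S n) h - sum_f_R0 (fun i => h i * poi (INR (S n) * q) i) (S n)
  <= q * (1 - exp (- (INR (S n) * q))).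
Proof.
  intros Hq Hh.
  set (m := S n). set (l := INR m * q).
  assert (Hl : 0 < l) by (apply Rmult_lt_0_compat; [apply lt_0_INR; unfold m; lia|lra]).
  set (G := steinSolFor l m h).
  set (Ph := sum_f_R0 (fun i => h i * poi l i) m).
  assert (Hstein : binomExp q m (fun k => l * G (S k) - INR k * G k) = binomExp q m h - Ph).
  { transitivity (binomExp q m (fun k => h k + (- Ph) * 1)).
    - unfold binomExp. apply sum_eq. intros k Hk. unfold G, Ph.
      rewrite steinSolFor_equation by auto. ring.
    - rewrite binomExp_plus, binomExp_scal, binomExp_one. ring. }
  assert (Hbias : binomExp q m (fun k => l * G (S k) - INR k * G k) =
                  l * q * binomExp q n (fun k => G (S (S k)) - G (S k))).
  { rewrite (binomExp_ext q m _ (fun k => l * G (S k) + (-1) * (INR k * G k))) by (intro; ring).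
    rewrite binomExp_plus, !binomExp_scal. unfold m. rewrite binomExp_size_bias, binomExp_S.
    rewrite (binomExp_ext q n (fun k => G (S (S k)) - G (S k)) (fun k => G (S (S k)) + (-1) * G (S k)))
      by (intro; ring).
    rewrite binomExp_plus, binomExp_scal. unfold l, m. ring. }
  assert (Hincr : binomExp q n (fun k => G (S (S k)) - G (S k)) <= (1 - exp (- l)) / l).
  { apply Rle_trans with (binomExp q n (fun _ => (1 - exp (- l)) / l * 1)).
    - apply binomExp_mono; [lra|]. intros k _. rewrite Rmult_1_r.
      apply steinSolFor_increment; auto.
    - rewrite binomExp_scal, binomExp_one. lra. }
  fold m l Ph. rewrite <- Hstein, Hbias.
  replace (q * (1 - exp (- l))) with (l * q * ((1 - exp (- l)) / l)) by (field; lra).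
  apply Rmult_le_compat_l; [apply Rmult_le_pos|]; lra.
Qed.

(* It follows from Stein's bound applied to the indicator of the set where
   the binomial weight exceeds the Poisson weight. *)
Lemma binomial_poisson_tv n q N : 0 < q <= 1 ->
  sum_f_R0 (fun k => Rabs (binom_pmf (S n) q k - poi (INR (S n) * q) k)) N
  <= 2 * (Rmin (INR (S n) * q) 1 * q).
Proof.
  intro Hq. set (m := S n). set (l := INR m * q).
  assert (Hl : 0 < l) by (apply Rmult_lt_0_compat; [apply lt_0_INR; unfold m; lia|lra]).
  set (b := binom_pmf m q).
  set (h := fun k => if Rlt_dec (poi l k) (b k) then 1 else 0).
  assert (Hh : forall k, 0 <= h k <= 1) by (intro k; unfold h; destruct (Rlt_dec _ _); lra).
  assert (Habs : forall k, Rabs (b k - poi l k) = 2 * ((b k - poi l k) * h k) - (b k - poi l k)).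
  { intro k. unfold h. destruct (Rlt_dec (poi l k) (b k)).
    - rewrite Rabs_right by lra. ring.
    - rewrite Rabs_left1 by lra. ring. }
  set (N' := Nat.max N m).
  apply Rle_trans with (sum_f_R0 (fun k => Rabs (b k - poi l k)) N').
  { apply sum_nonneg_mono; [intro; apply Rabs_pos|unfold N'; lia]. }
  rewrite (sum_eq _ _ N' (fun k _ => Habs k)), minus_sum, sum_scal_l, minus_sum.
  assert (H1 : sum_f_R0 (fun k => (b k - poi l k) * h k) N' =
               binomExp q m h - sum_f_R0 (fun i => h i * poi l i) m).
  { rewrite (sum_vanishing_tail _ m N'); [|unfold N'; lia|].
    2:{ intros k Hk. unfold h, b. rewrite binom_pmf_out by auto.
        destruct (Rlt_dec _ _) as [Hlt|]; [pose proof (poi_pos l k Hl)|]; lra. }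
    unfold binomExp. rewrite <- minus_sum. apply sum_eq. intros; unfold b; ring. }
  assert (H2 : sum_f_R0 b N' = 1).
  { rewrite (sum_vanishing_tail b m N'); [|unfold N'; lia|intros; apply binom_pmf_out; auto].
    rewrite <- (binomExp_one q m). apply sum_eq. intros; unfold b; ring. }
  assert (H3 : sum_f_R0 (poi l) N' <= 1) by (apply poiCdf_le_1; lra).
  assert (H4 := binomial_stein_bound n q h Hq Hh). fold m l in H4.
  assert (H5 : q * (1 - exp (- l)) <= Rmin l 1 * q).
  { rewrite (Rmult_comm q). apply Rmult_le_compat_r; [lra|].
    pose proof (exp_pos (- l)). pose proof (exp_ineq1_le (- l)). apply Rmin_glb; lra. }
  rewrite H1, H2. lra.
Qed.

(** * Mixing over the colour counts *)

Lemma tv_mixture_bound pmf k (B P : nat -> list nat -> R) (h : list nat -> R) :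
  (forall n, 0 <= pmf n) -> infinite_sum pmf 1 ->
  (forall n, bounded (B n)) -> (forall n, bounded (P n)) -> bounded h ->
  (forall N t, in_support pmf k t ->
     sum_f_R0 (fun n => Rabs (B n t - P n t)) N <= 2 * h t) ->
  tv (fun n => expK pmf k (B n)) (fun n => expK pmf k (P n)) <= expK pmf k h.
Proof.
  intros Hn Hs HB HP Hh Hpt.
  assert (HD : forall n, bounded (fun t => Rabs (B n t - P n t))).
  { intro n. apply bounded_abs, bounded_plus; [|apply bounded_opp]; auto. }
  unfold tv. cut (ser (fun n => Rabs (expK pmf k (B n) - expK pmf k (P n))) <= 2 * expK pmf k h);
    [lra|].
  apply ser_le_of_partial_sums; [intro; apply Rabs_pos|]. intro N.
  apply Rle_trans with (sum_f_R0 (fun n => expK pmf k (fun t => Rabs (B n t - P n t))) N).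
  { apply sum_Rle. intros n _. rewrite <- expK_minus by auto.
    apply expK_abs; auto. apply bounded_plus; [|apply bounded_opp]; auto. }
  rewrite expK_sum, <- expK_scal by auto.
  apply expK_mono; auto; [apply bounded_sum|apply bounded_scal]; auto.
Qed.

Lemma nDraw_of_integer p t m : p * INR (sumV t) = INR m -> nDraw p t = m.
Proof.
  intro H. unfold nDraw. rewrite H. unfold Int_part.
  rewrite <- (up_tech (INR m) (Z.of_nat m)).
  - rewrite Z.add_simpl_r. apply Nat2Z.id.
  - rewrite INR_IZR_INZ. lra.
  - rewrite plus_IZR, <- INR_IZR_INZ. simpl. lra.
Qed.

Lemma nth_le_sumV j t : (nth j t 0 <= sumV t)%nat.
Proof.
  revert t; induction j as [|j IH]; intros [|a t]; simpl; try lia.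
  specialize (IH t). unfold sumV in *. simpl. lia.
Qed.

Lemma ratio_unit a b : (a <= b)%nat -> 0 <= INR a / INR b <= 1.
Proof.
  intro H. destruct b as [|b].
  - replace a with 0%nat by lia. simpl. unfold Rdiv. rewrite Rmult_0_l. lra.
  - assert (0 < INR (S b)) by (apply lt_0_INR; lia). apply le_INR in H. split.
    + apply Rmult_le_pos; [apply pos_INR|left; apply Rinv_0_lt_compat; auto].
    + apply (Rmult_le_reg_r (INR (S b))); auto.
      replace (INR a / INR (S b) * INR (S b)) with (INR a) by (field; lra). lra.
Qed.

Definition boundIntegrand (p : R) (a b : nat) : R :=
  Rmin (p * INR a) 1 * (if le_dec a b then INR a / INR b else 0).

Lemma boundIntegrand_bound p a b : 0 < p -> Rabs (boundIntegrand p a b) <= 1.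
Proof.
  intro Hp. unfold boundIntegrand. rewrite Rabs_mult.
  assert (Hmin : 0 <= Rmin (p * INR a) 1 <= 1).
  { split; [apply Rmin_glb; [apply Rmult_le_pos; [lra|apply pos_INR]|lra]|apply Rmin_r]. }
  rewrite (Rabs_right (Rmin _ _)) by lra.
  destruct (le_dec a b) as [Hab|].
  - pose proof (ratio_unit a b Hab). rewrite Rabs_right by lra. nra.
  - rewrite Rabs_R0. lra.
Qed.

(* Conditionally on the colour counts [t], the number of drawn balls of
   colour [j+1] is Binomial(pV, v/V) with v = v_(j+1) >= 1, whose mean is p v;
   the Barbour-Hall bound compares it with Poisson(p v). *)
Lemma conditional_tv_bound pmf p K j N t :
  pmf 0%nat = 0 -> 0 < p < 1 -> (j < K)%nat ->
  (forall t, length t = K -> (forall x, In x t -> 0 < pmf x) ->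
     exists m : nat, p * INR (sumV t) = INR m) ->
  in_support pmf K t ->
  sum_f_R0 (fun n => Rabs (binom_pmf (nDraw p t) (INR (nth j t 0%nat) / INR (sumV t)) n
                           - poi (p * INR (nth j t 0%nat)) n)) N
  <= 2 * boundIntegrand p (nth j t 0%nat) (sumV t).
Proof.
  intros Hpmf0 Hp Hj Hint [Hlen Hsup].
  set (v := nth j t 0%nat). set (V := sumV t).
  assert (Hv : (1 <= v)%nat).
  { assert (Hpv := Hsup v (nth_In t 0%nat (n := j) ltac:(lia))).
    destruct (Nat.eq_dec v 0) as [E|E]; [|lia]. rewrite E, Hpmf0 in Hpv. lra. }
  assert (HvV : (v <= V)%nat) by apply nth_le_sumV.
  assert (HV : 0 < INR V) by (apply lt_0_INR; lia).
  destruct (Hint t Hlen Hsup) as [m Hm]. fold V in Hm.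
  rewrite (nDraw_of_integer p t m Hm).
  destruct m as [|n].
  { simpl in Hm. nra. }
  assert (Hq : 0 < INR v / INR V <= 1).
  { pose proof (ratio_unit v V HvV). split; [|lra].
    apply Rdiv_lt_0_compat; [apply lt_0_INR; lia|exact HV]. }
  assert (Hmean : INR (S n) * (INR v / INR V) = p * INR v) by (rewrite <- Hm; field; lra).
  unfold boundIntegrand. destruct (le_dec v V) as [_|]; [|lia].
  rewrite <- Hmean. apply binomial_poisson_tv; auto.
Qed.

Theorem mainTheorem1 (pmf : nat -> R) (p : R) (K : nat)
  (Hpmf_nonneg : forall n, 0 <= pmf n)
  (Hpmf_pos : pmf 0%nat = 0)
  (Hpmf_sum : infinite_sum pmf 1)
  (HK : (1 <= K)%nat)
  (Hp : 0 < p < 1)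
  (Hint : forall t : list nat, length t = K ->
          (forall x, In x t -> 0 < pmf x) ->
          exists m : nat, p * INR (sumV t) = INR m) :
  forall i : nat, (1 <= i <= K)%nat ->
    tv (lawTilde pmf p K i) (Qdist pmf p) <= rhsBound pmf p K.
Proof.
  intros i Hi. set (j := (i - 1)%nat). assert (Hj : (j < K)%nat) by (unfold j; lia).
  (* Q is the Poisson(p v_j) law averaged over the counts. *)
  assert (HQ : Qdist pmf p = fun n => expK pmf K (fun t => poi (p * INR (nth j t 0%nat)) n)).
  { extensionality n. symmetry.
    exact (expK_coordinate pmf Hpmf_sum (fun a => poi (p * INR a) n) K j Hj). }
  (* By exchangeability the bound may be computed with colour j instead of 1. *)
  assert (Hrhs : rhsBound pmf p K =
                 expK pmf K (fun t => boundIntegrand p (nth j t 0%nat) (sumV t))).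
  { rewrite (expK_exchange pmf Hpmf_nonneg Hpmf_sum (boundIntegrand p) 1 K
               (fun a b => boundIntegrand_bound p a b (proj1 Hp)) j Hj).
    unfold rhsBound, boundIntegrand. f_equal. extensionality t.
    destruct (le_dec _ _) as [|Hnot]; [reflexivity|]. exfalso. apply Hnot, nth_le_sumV. }
  rewrite HQ, Hrhs. apply tv_mixture_bound; auto.
  - intros n. exists 1. intro t. pose proof (ratio_unit _ _ (nth_le_sumV j t)).
    rewrite Rabs_right; [apply binom_pmf_le_1|apply Rle_ge, binom_pmf_nonneg]; auto.
  - intros n. exists 1. intro t.
    assert (0 <= p * INR (nth j t 0%nat)) by (apply Rmult_le_pos; [lra|apply pos_INR]).
    rewrite Rabs_right; [apply poi_le_1|apply Rle_ge, poi_nonneg]; auto.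
  - exists 1. intro t. apply boundIntegrand_bound. lra.
  - intros N t Ht. apply (conditional_tv_bound pmf p K j N t); auto.
Qed.
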